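(* Let $(\mathcal{C},d,\eta)$ be a monoidal anti-involutive category, with $d$ having monoidal structure $\chi_{c_1,c_2}\colon dc_1\otimes dc_2\to d(c_1\otimes c_2)$ and $u\colon1\to d(1)$. Then defining $(c_1,h_1)\otimes(c_2,h_2):=(c_1\otimes c_2,\ \chi_{c_1,c_2}\circ(h_1\otimes h_2))$, with unit $(1,u)$ and with associators and unitors those of $\mathcal{C}$, makes $\mathrm{Herm}\,\mathcal{C}$ into a monoidal dagger category.
   Context: An anti-involutive category $(\mathcal{C},d,\eta)$: functor $d\colon\mathcal{C}\to\mathcal{C}^{\mathrm{op}}$ and natural isomorphism $\eta\colon\mathrm{id}_{\mathcal{C}}\Rightarrow d^2$ with $d(\eta_c)\circ\eta_{dc}=\mathrm{id}_{dc}$. It is monoidal if $\mathcal{C}$ is monoidal, $d$ is a (strong) monoidal functor $\mathcal{C}\to\mathcal{C}^{\mathrm{op}}$ (where $\mathcal{C}^{\mathrm{op}}$ reverses composition but not the tensor product) and $\eta$ is a monoidal natural transformation. A Hermitian pairing on $c$ is an isomorphism $h\colon c\to dc$ with $d(h)\circ\eta_c=h$. $\mathrm{Herm}\,\mathcal{C}$ has objects $(c,h)$, morphisms $(c_1,h_1)\to(c_2,h_2)$ all morphisms $c_1\to c_2$ in $\mathcal{C}$, and dagger $f^\dagger=h_1^{-1}\circ d(f)\circ h_2$. A monoidal dagger category is a dagger category ($\dagger$ identity on objects, $f^{\dagger\dagger}=f$) with a monoidal structure such that $(f\otimes g)^\dagger=f^\dagger\otimes g^\dagger$ and associator and unitors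 are unitary ($u^\dagger=u^{-1}$). *)

Record Category := {
  ob : Type;
  hom : ob -> ob -> Type;
  comp : forall a b c, hom b c -> hom a b -> hom a c;
  idm : forall a, hom a a;
  comp_idl : forall a b (f : hom a b), comp a b b (idm b) f = f;
  comp_idr : forall a b (f : hom a b), comp a a b f (idm a) = f;
  comp_assoc : forall a b c e (f : hom a b) (g : hom b c) (h : hom c e),
      comp a c e h (comp a b c g f) = comp a b e (comp b c e h g) f
}.
Arguments ob : clear implicits.
Arguments hom {_} a b.
Arguments comp {_ a b c} g f.
Arguments idm {_} a.

Notation "g ∘ f" := (comp g f) (at level 40, left associativity).

Record MonoidalData (C : Category) := {
  tens : ob C -> ob C -> ob C;
  tensm : forall a b a' b', hom a a' -> hom b b' -> hom (tens a b) (tens a' b');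
  munit : ob C;
  assoc : forall a b c, hom (tens (tens a b) c) (tens a (tens b c));
  assoc_inv : forall a b c, hom (tens a (tens b c)) (tens (tens a b) c);
  lunit : forall a, hom (tens munit a) a;
  lunit_inv : forall a, hom a (tens munit a);
  runit : forall a, hom (tens a munit) a;
  runit_inv : forall a, hom a (tens a munit)
}.
Arguments tens {C} _ a b.
Arguments tensm {C} _ {a b a' b'} f g.
Arguments munit {C} _.
Arguments assoc {C} _ a b c.
Arguments assoc_inv {C} _ a b c.
Arguments lunit {C} _ a.
Arguments lunit_inv {C} _ a.
Arguments runit {C} _ a.
Arguments runit_inv {C} _ a.

Record MonoidalLaws (C : Category) (M : MonoidalData C) : Prop := {
  tensm_id : forall a b, tensm M (idm a) (idm b) = idm (tens M a b);
  tensm_comp : forall a b a' b' a'' b'' (f : hom a a') (f' : hom a' a'')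
      (g : hom b b') (g' : hom b' b''),
      tensm M (f' ∘ f) (g' ∘ g) = tensm M f' g' ∘ tensm M f g;
  assoc_iso1 : forall a b c, assoc_inv M a b c ∘ assoc M a b c = idm _;
  assoc_iso2 : forall a b c, assoc M a b c ∘ assoc_inv M a b c = idm _;
  assoc_nat : forall a b c a' b' c' (f : hom a a') (g : hom b b') (h : hom c c'),
      assoc M a' b' c' ∘ tensm M (tensm M f g) h
      = tensm M f (tensm M g h) ∘ assoc M a b c;
  lunit_iso1 : forall a, lunit_inv M a ∘ lunit M a = idm _;
  lunit_iso2 : forall a, lunit M a ∘ lunit_inv M a = idm _;
  lunit_nat : forall a b (f : hom a b),
      lunit M b ∘ tensm M (idm (munit M)) f = f ∘ lunit M a;
  runit_iso1 : forall a, runit_inv M a ∘ runit M a = idm _;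
  runit_iso2 : forall a, runit M a ∘ runit_inv M a = idm _;
  runit_nat : forall a b (f : hom a b),
      runit M b ∘ tensm M f (idm (munit M)) = f ∘ runit M a;
  pentagon : forall a b c e,
      tensm M (idm a) (assoc M b c e) ∘ assoc M a (tens M b c) e
        ∘ tensm M (assoc M a b c) (idm e)
      = assoc M a b (tens M c e) ∘ assoc M (tens M a b) c e;
  triangle : forall a b,
      tensm M (idm a) (lunit M b) ∘ assoc M a (munit M) b
      = tensm M (runit M a) (idm b)
}.

Record DaggerData (C : Category) := {
  dag : forall a b : ob C, hom a b -> hom b a
}.
Arguments dag {C} _ {a b} f.

Record DaggerLaws (C : Category) (Dg : DaggerData C) : Prop := {
  dag_invol : forall a b (f : hom a b), dag Dg (dag Dg f) = f;
  dag_id : forall a, dag Dg (idm a) = idm a;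
  dag_comp : forall a b c (f : hom a b) (g : hom b c),
      dag Dg (g ∘ f) = dag Dg f ∘ dag Dg g
}.

Record MonoidalDaggerLaws (C : Category) (M : MonoidalData C)
    (Dg : DaggerData C) : Prop := {
  mdl_monoidal : MonoidalLaws C M;
  mdl_dagger : DaggerLaws C Dg;
  mdl_dag_tens : forall a b a' b' (f : hom a a') (g : hom b b'),
      dag Dg (tensm M f g) = tensm M (dag Dg f) (dag Dg g);
  mdl_assoc_unitary : forall a b c, dag Dg (assoc M a b c) = assoc_inv M a b c;
  mdl_lunit_unitary : forall a, dag Dg (lunit M a) = lunit_inv M a;
  mdl_runit_unitary : forall a, dag Dg (runit M a) = runit_inv M a
}.

(* d : C -> C^op (so dmap reverses arrows), eta : id => d^2 with chosen
   inverse, and the strong monoidal structure of d written, as in the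
   paper, by chi_{a,b} : da (x) db -> d(a (x) b) and u : 1 -> d 1 in C
   (with chosen inverses). *)
Record AntiInvData (C : Category) (M : MonoidalData C) := {
  dob : ob C -> ob C;
  dmap : forall a b, hom a b -> hom (dob b) (dob a);
  eta : forall c, hom c (dob (dob c));
  eta_inv : forall c, hom (dob (dob c)) c;
  chi : forall a b, hom (tens M (dob a) (dob b)) (dob (tens M a b));
  chi_inv : forall a b, hom (dob (tens M a b)) (tens M (dob a) (dob b));
  uu : hom (munit M) (dob (munit M));
  uu_inv : hom (dob (munit M)) (munit M)
}.
Arguments dob {C M} _ c.
Arguments dmap {C M} _ {a b} f.
Arguments eta {C M} _ c.
Arguments eta_inv {C M} _ c.
Arguments chi {C M} _ a b.
Arguments chi_inv {C M} _ a b.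
Arguments uu {C M} _.
Arguments uu_inv {C M} _.

Record AntiInvLaws (C : Category) (M : MonoidalData C) (D : AntiInvData C M)
    : Prop := {
  dmap_id : forall a, dmap D (idm a) = idm (dob D a);
  dmap_comp : forall a b c (f : hom a b) (g : hom b c),
      dmap D (g ∘ f) = dmap D f ∘ dmap D g;
  eta_iso1 : forall c, eta_inv D c ∘ eta D c = idm c;
  eta_iso2 : forall c, eta D c ∘ eta_inv D c = idm _;
  eta_nat : forall a b (f : hom a b),
      eta D b ∘ f = dmap D (dmap D f) ∘ eta D a;
  eta_triangle : forall c, dmap D (eta D c) ∘ eta D (dob D c) = idm (dob D c);
  (* strong monoidal structure of d : C -> C^op (C^op with the same tensor,
     associator alpha^{-1}, unitors lambda^{-1}, rho^{-1}); structure maps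
     of d in C^op are chi^{-1}, u^{-1}; below the axioms are transported
     to C and rewritten in terms of chi, u *)
  chi_iso1 : forall a b, chi_inv D a b ∘ chi D a b = idm _;
  chi_iso2 : forall a b, chi D a b ∘ chi_inv D a b = idm _;
  uu_iso1 : uu_inv D ∘ uu D = idm _;
  uu_iso2 : uu D ∘ uu_inv D = idm _;
  chi_nat : forall a b a' b' (f : hom a a') (g : hom b b'),
      dmap D (tensm M f g) ∘ chi D a' b' = chi D a b ∘ tensm M (dmap D f) (dmap D g);
  chi_assoc : forall a b c,
      dmap D (assoc M a b c) ∘ chi D a (tens M b c)
        ∘ tensm M (idm (dob D a)) (chi D b c) ∘ assoc M (dob D a) (dob D b) (dob D c)
      = chi D (tens M a b) c ∘ tensm M (chi D a b) (idm (dob D c));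
  chi_lunit : forall a,
      chi D (munit M) a ∘ tensm M (uu D) (idm (dob D a))
      = dmap D (lunit M a) ∘ lunit M (dob D a);
  chi_runit : forall a,
      chi D a (munit M) ∘ tensm M (idm (dob D a)) (uu D)
      = dmap D (runit M a) ∘ runit M (dob D a);
  (* eta is a monoidal natural transformation id => d^2, where d^2 carries
     the composite monoidal structure d(chi^{-1}_{a,b}) o chi_{da,db} and
     d(u^{-1}) o u *)
  eta_monoidal_tens : forall a b,
      eta D (tens M a b)
      = dmap D (chi_inv D a b) ∘ chi D (dob D a) (dob D b)
          ∘ tensm M (eta D a) (eta D b);
  eta_monoidal_unit : eta D (munit M) = dmap D (uu_inv D) ∘ uu D
}.

Section Herm.
Variables (C : Category) (M : MonoidalData C) (D : AntiInvData C M).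

Record HObj := { hc : ob C; hh : hom hc (dob D hc); hinv : hom (dob D hc) hc }.

Definition HermOK (X : HObj) : Prop :=
  hinv X ∘ hh X = idm (hc X) /\ hh X ∘ hinv X = idm (dob D (hc X)) /\
  dmap D (hh X) ∘ eta D (hc X) = hh X.

Definition HermOb := { X : HObj | HermOK X }.

Definition HermCat : Category.
Proof.
  refine {| ob := HermOb;
            hom := fun X Y => @hom C (hc (proj1_sig X)) (hc (proj1_sig Y));
            comp := fun X Y Z g f => g ∘ f;
            idm := fun X => idm (hc (proj1_sig X)) |}.
  - intros; apply comp_idl.
  - intros; apply comp_idr.
  - intros; apply comp_assoc.
Defined.

Definition Herm_dagger : DaggerData HermCat :=
  {| dag := fun (X Y : ob HermCat) (f : @hom C (hc (proj1_sig X)) (hc (proj1_sig Y))) =>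
       hinv (proj1_sig X) ∘ dmap D f ∘ hh (proj1_sig Y) |}.

Definition raw_tens (X Y : HObj) : HObj :=
  {| hc := tens M (hc X) (hc Y);
     hh := chi D (hc X) (hc Y) ∘ tensm M (hh X) (hh Y);
     hinv := tensm M (hinv X) (hinv Y) ∘ chi_inv D (hc X) (hc Y) |}.

Definition raw_unit : HObj :=
  {| hc := munit M; hh := uu D; hinv := uu_inv D |}.

Definition Herm_monoidal
    (tok : forall X Y : HermOb, HermOK (raw_tens (proj1_sig X) (proj1_sig Y)))
    (uok : HermOK raw_unit) : MonoidalData HermCat :=
  @Build_MonoidalData HermCat
    (fun X Y : ob HermCat => exist _ (raw_tens (proj1_sig X) (proj1_sig Y)) (tok X Y))
    (fun (X Y X' Y' : ob HermCat) f g => tensm M f g)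
    (exist _ raw_unit uok)
    (fun X Y Z : ob HermCat => assoc M (hc (proj1_sig X)) (hc (proj1_sig Y)) (hc (proj1_sig Z)))
    (fun X Y Z : ob HermCat => assoc_inv M (hc (proj1_sig X)) (hc (proj1_sig Y)) (hc (proj1_sig Z)))
    (fun X : ob HermCat => lunit M (hc (proj1_sig X)))
    (fun X : ob HermCat => lunit_inv M (hc (proj1_sig X)))
    (fun X : ob HermCat => runit M (hc (proj1_sig X)))
    (fun X : ob HermCat => runit_inv M (hc (proj1_sig X))).

End Herm.
Arguments HermOK {C M} D X.
Arguments HermOb {C M} D.
Arguments HermCat {C M} D.
Arguments Herm_dagger {C M} D.
Arguments raw_tens {C M} D X Y.
Arguments raw_unit {C M} D.
Arguments Herm_monoidal {C M} D tok uok.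

(* The pairing chi ∘ (h1 ⊗ h2) is again Hermitian because eta is a monoidal
   transformation and chi is natural; the dagger f ↦ h1^-1 ∘ d f ∘ h2 is
   involutive because h1 is Hermitian and eta is natural.  The axioms relating
   chi and u to the associator and unitors say precisely that these structure
   maps preserve the pairings, and an invertible morphism f preserving the
   pairings is unitary, since f† ∘ f = h1^-1 ∘ (d f ∘ h2 ∘ f) = h1^-1 ∘ h1. *)

#[local] Arguments comp_assoc {_ _ _ _ _} f g h.
#[local] Arguments comp_idl {_ _ _} f.
#[local] Arguments comp_idr {_ _ _} f.
#[local] Arguments tensm_id {_ _} _ a b.
#[local] Arguments tensm_comp {_ _} _ {_ _ _ _ _ _} f f' g g'.
#[local] Arguments assoc_nat {_ _} _ {_ _ _ _ _ _} f g h.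
#[local] Arguments lunit_nat {_ _} _ {_ _} f.
#[local] Arguments runit_nat {_ _} _ {_ _} f.
#[local] Arguments dmap_id {_ _ _} _ a.
#[local] Arguments dmap_comp {_ _ _} _ {_ _ _} f g.
#[local] Arguments eta_nat {_ _ _} _ {_ _} f.
#[local] Arguments chi_iso1 {_ _ _} _ a b.
#[local] Arguments chi_iso2 {_ _ _} _ a b.
#[local] Arguments chi_nat {_ _ _} _ {_ _ _ _} f g.
#[local] Arguments chi_assoc {_ _ _} _ a b c.
#[local] Arguments chi_lunit {_ _ _} _ a.
#[local] Arguments chi_runit {_ _ _} _ a.
#[local] Arguments eta_monoidal_tens {_ _ _} _ a b.

Section CategoryFacts.
Context {C : Category}.

Lemma comp_cancel_l {a b c : ob C} (f : hom a b) (g : hom b a) (x : hom c a) :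
  g ∘ f = idm a -> g ∘ (f ∘ x) = x.
Proof. intro gf. rewrite comp_assoc, gf. apply comp_idl. Qed.

Lemma left_inverse_eq_right_inverse {a b : ob C} (f : hom a b) (g f' : hom b a) :
  g ∘ f = idm a -> f ∘ f' = idm b -> g = f'.
Proof.
  intros gf ff'.
  rewrite <- (comp_idr g), <- ff', comp_assoc, gf. apply comp_idl.
Qed.

End CategoryFacts.

Section MonoidalFacts.
Context {C : Category} {M : MonoidalData C}.
Hypothesis ML : MonoidalLaws C M.

Lemma tensm_factor_l {a b a' b' a'' : ob C} (f : hom b b') (g' : hom a a') (g : hom a' a'') :
  tensm M (g ∘ g') f = tensm M g (idm b') ∘ tensm M g' f.
Proof. rewrite <- (tensm_comp ML), comp_idl. reflexivity. Qed.

Lemma tensm_factor_r {a b a' b' b'' : ob C} (f : hom a a') (g' : hom b b') (g : hom b' b'') :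
  tensm M f (g ∘ g') = tensm M (idm a') g ∘ tensm M f g'.
Proof. rewrite <- (tensm_comp ML), comp_idl. reflexivity. Qed.

End MonoidalFacts.

Section HermitianDagger.
Context {C : Category} {M : MonoidalData C} {D : AntiInvData C M}.
Hypothesis AL : AntiInvLaws C M D.
Local Notation hc := (hc C M D).
Local Notation hh := (hh C M D).
Local Notation hinv := (hinv C M D).

Definition hdag (X Y : HObj C M D) (f : hom (hc X) (hc Y)) : hom (hc Y) (hc X) :=
  hinv X ∘ dmap D f ∘ hh Y.

Definition preserves_pairing (X Y : HObj C M D) (f : hom (hc X) (hc Y)) : Prop :=
  dmap D f ∘ hh Y ∘ f = hh X.

Lemma dmap_inverse {a b : ob C} (f : hom a b) (g : hom b a) :
  g ∘ f = idm a -> dmap D f ∘ dmap D g = idm (dob D a).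
Proof. intro gf. rewrite <- (dmap_comp AL), gf. apply (dmap_id AL). Qed.

Lemma dmap_hinv (X : HObj C M D) : HermOK D X -> dmap D (hinv X) ∘ hh X = eta D (hc X).
Proof.
  intros [_ [h_hinv h_herm]].
  rewrite <- h_herm, comp_assoc, (dmap_inverse _ _ h_hinv). apply comp_idl.
Qed.

Lemma hdag_involutive (X Y : HObj C M D) (f : hom (hc X) (hc Y)) :
  HermOK D X -> HermOK D Y -> hdag Y X (hdag X Y f) = f.
Proof.
  intros HX [hinv_h [_ h_herm]]. unfold hdag.
  rewrite !(dmap_comp AL), <- !comp_assoc, (dmap_hinv X HX), <- (eta_nat AL), !comp_assoc.
  rewrite <- (comp_assoc (eta D _)), h_herm, hinv_h. apply comp_idl.
Qed.

Lemma hdag_idm (X : HObj C M D) : HermOK D X -> hdag X X (idm (hc X)) = idm (hc X).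
Proof. intros [hinv_h _]. unfold hdag. rewrite (dmap_id AL), comp_idr. exact hinv_h. Qed.

Lemma hdag_comp (X Y Z : HObj C M D) (f : hom (hc X) (hc Y)) (g : hom (hc Y) (hc Z)) :
  HermOK D Y -> hdag X Z (g ∘ f) = hdag X Y f ∘ hdag Y Z g.
Proof.
  intros [_ [h_hinv _]]. unfold hdag.
  rewrite (dmap_comp AL), <- !comp_assoc, (comp_cancel_l _ _ _ h_hinv). reflexivity.
Qed.

Lemma unitary_of_preserves_pairing (X Y : HObj C M D) (f : hom (hc X) (hc Y))
    (f' : hom (hc Y) (hc X)) :
  HermOK D X -> preserves_pairing X Y f -> f ∘ f' = idm (hc Y) -> hdag X Y f = f'.
Proof.
  intros [hinv_h _] pf ff'. apply (left_inverse_eq_right_inverse f); [|exact ff'].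
  unfold hdag. rewrite <- hinv_h, <- pf, !comp_assoc. reflexivity.
Qed.

Lemma Herm_dagger_laws : DaggerLaws (HermCat D) (Herm_dagger D).
Proof.
  split.
  - intros [X HX] [Y HY] f. exact (hdag_involutive X Y f HX HY).
  - intros [X HX]. exact (hdag_idm X HX).
  - intros [X HX] [Y HY] [Z HZ] f g. exact (hdag_comp X Y Z f g HY).
Qed.

End HermitianDagger.

Section HermitianTensor.
Context {C : Category} {M : MonoidalData C} {D : AntiInvData C M}.
Hypotheses (ML : MonoidalLaws C M) (AL : AntiInvLaws C M D).
Local Notation hc := (hc C M D).
Local Notation hh := (hh C M D).
Local Notation hinv := (hinv C M D).

Lemma raw_tens_ok (X Y : HObj C M D) :
  HermOK D X -> HermOK D Y -> HermOK D (raw_tens D X Y).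
Proof.
  destruct X as [a h h'], Y as [b k k']; intros [h'h [hh' h_herm]] [k'k [kk' k_herm]].
  unfold HermOK; simpl in *. split; [|split].
  - rewrite <- comp_assoc, (comp_cancel_l _ _ _ (chi_iso1 AL a b)),
      <- (tensm_comp ML), h'h, k'k. apply (tensm_id ML).
  - rewrite <- comp_assoc, (comp_assoc (chi_inv D a b)), <- (tensm_comp ML), hh', kk',
      (tensm_id ML), comp_idl. apply (chi_iso2 AL).
  - rewrite (eta_monoidal_tens AL), (dmap_comp AL), <- !comp_assoc.
    rewrite (comp_cancel_l _ _ _ (dmap_inverse AL _ _ (chi_iso1 AL a b))).
    rewrite comp_assoc, (chi_nat AL), <- comp_assoc, <- (tensm_comp ML), h_herm, k_herm.
    reflexivity.
Qed.

Lemma raw_unit_ok : HermOK D (raw_unit D).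
Proof.
  unfold HermOK; simpl. split; [|split].
  - apply (uu_iso1 _ _ _ AL).
  - apply (uu_iso2 _ _ _ AL).
  - rewrite (eta_monoidal_unit _ _ _ AL), comp_assoc, (dmap_inverse AL _ _ (uu_iso1 _ _ _ AL)).
    apply comp_idl.
Qed.

Lemma hdag_tensm (X Y X' Y' : HObj C M D) (f : hom (hc X) (hc X')) (g : hom (hc Y) (hc Y')) :
  hdag (raw_tens D X Y) (raw_tens D X' Y') (tensm M f g)
  = tensm M (hdag X X' f) (hdag Y Y' g).
Proof.
  unfold hdag; simpl.
  rewrite <- !comp_assoc, (comp_assoc _ (chi D _ _)), (chi_nat AL), <- comp_assoc,
    (comp_cancel_l _ _ _ (chi_iso1 AL _ _)), <- !(tensm_comp ML), !comp_assoc.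
  reflexivity.
Qed.

Lemma assoc_preserves_pairing (X Y Z : HObj C M D) :
  preserves_pairing (raw_tens D (raw_tens D X Y) Z) (raw_tens D X (raw_tens D Y Z))
    (assoc M (hc X) (hc Y) (hc Z)).
Proof.
  destruct X as [a h h'], Y as [b k k'], Z as [c l l']; unfold preserves_pairing; simpl.
  rewrite (tensm_factor_r ML), (tensm_factor_l ML), <- !comp_assoc, <- (assoc_nat ML),
    !comp_assoc, (chi_assoc AL), <- !comp_assoc.
  reflexivity.
Qed.

Lemma lunit_preserves_pairing (X : HObj C M D) :
  preserves_pairing (raw_tens D (raw_unit D) X) X (lunit M (hc X)).
Proof.
  destruct X as [a h h']; unfold preserves_pairing; simpl.
  rewrite <- comp_assoc, <- (lunit_nat ML), comp_assoc, <- (chi_lunit AL), <- comp_assoc,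
    <- (tensm_comp ML), comp_idl, comp_idr.
  reflexivity.
Qed.

Lemma runit_preserves_pairing (X : HObj C M D) :
  preserves_pairing (raw_tens D X (raw_unit D)) X (runit M (hc X)).
Proof.
  destruct X as [a h h']; unfold preserves_pairing; simpl.
  rewrite <- comp_assoc, <- (runit_nat ML), comp_assoc, <- (chi_runit AL), <- comp_assoc,
    <- (tensm_comp ML), comp_idl, comp_idr.
  reflexivity.
Qed.

Lemma Herm_monoidal_laws tok uok : MonoidalLaws (HermCat D) (Herm_monoidal D tok uok).
Proof. destruct ML; split; intros; cbn; auto. Qed.

Lemma Herm_monoidal_dagger_laws tok uok :
  MonoidalDaggerLaws (HermCat D) (Herm_monoidal D tok uok) (Herm_dagger D).
Proof.
  split.
  - apply Herm_monoidal_laws.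
  - apply (Herm_dagger_laws AL).
  - intros X Y X' Y' f g. apply hdag_tensm.
  - intros X Y Z.
    apply unitary_of_preserves_pairing; [apply tok | apply assoc_preserves_pairing
      | apply (assoc_iso2 _ _ ML)].
  - intros X.
    apply unitary_of_preserves_pairing; [apply tok | apply lunit_preserves_pairing
      | apply (lunit_iso2 _ _ ML)].
  - intros X.
    apply unitary_of_preserves_pairing; [apply tok | apply runit_preserves_pairing
      | apply (runit_iso2 _ _ ML)].
Qed.

End HermitianTensor.

Theorem mainTheorem6 (C : Category) (M : MonoidalData C) (D : AntiInvData C M) :
  MonoidalLaws C M ->
  AntiInvLaws C M D ->
  exists (tok : forall X Y : HermOb D, HermOK D (raw_tens D (proj1_sig X) (proj1_sig Y)))
         (uok : HermOK D (raw_unit D)),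
    MonoidalDaggerLaws (HermCat D) (Herm_monoidal D tok uok) (Herm_dagger D).
Proof.
  intros ML AL.
  exists (fun X Y => raw_tens_ok ML AL _ _ (proj2_sig X) (proj2_sig Y)).
  exists (raw_unit_ok AL).
  apply Herm_monoidal_dagger_laws; assumption.
Qed.
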